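(* Let $A,B\in\widehat\Xi_d$ and write $[B]*[A]=\sum_{C\in\widehat\Xi_d}Q^C_{B,A}[C]$ in $\widehat{\mathbb S}_d$. Suppose $B=\sum_{j=1}^n(\beta_jE^{j,j}+\alpha_jE^{j,j+1})$ or $B=\sum_{j=1}^n(\beta_jE^{j,j}+\alpha_jE^{j+1,j})$ for some $\alpha_j,\beta_j\in\mathbb Z_{\ge0}$. If $Q^C_{B,A}\neq0$, then $\varepsilon_i(C)=\varepsilon_i(A)+\varepsilon_i(B)$ for all $i\in\mathbb Z$.
   Context: Fix $n\ge1$, $d\ge0$, $\mathbb A=\mathbb Z[v,v^{-1}]$. $\widehat\Xi_d$ is the set of $\mathbb Z\times\mathbb Z$ matrices $A=(a_{ij})$ with $a_{ij}\in\mathbb Z_{\ge0}$, $a_{i+n,j+n}=a_{ij}$ and $\sum_{1\le i\le n,\,j\in\mathbb Z}a_{ij}=d$. $E^{i,j}$ is the $\mathbb Z\times\mathbb Z$ matrix with $(k,l)$-entry $1$ if $(k,l)=(i+pn,j+pn)$ for some $p\in\mathbb Z$ and $0$ otherwise. $\widehat{\mathbb S}_d$ is the generic affine $v$-Schur algebra: the free $\mathbb A$-algebra with basis $\{e_A\}_{A\in\widehat\Xi_d}$ whose structure constants specialize at $v=\sqrt q$ to those of the convolution algebra of $GL_d(\mathbb F_q((\varepsilon)))$-invariant functions on pairs of periodic lattice chains (of period $n$) with respect to characteristic functions of orbits, orbits being indexed by $\widehat\Xi_d$ via $a_{ij}=\dim\frac{\mathbf L_i\cap\mathbf L'_j}{\mathbf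 L_{i-1}\cap\mathbf L'_j+\mathbf L_i\cap\mathbf L'_{j-1}}$. The standard basis is $[A]=v^{-d_A}e_A$ with $d_A=\sum_{1\le i\le n,\ i\ge k,\ j<l}a_{ij}a_{kl}$. For $i\in\mathbb Z$, $\varepsilon_i(A)=\sum_{r\le i<s}a_{rs}-\sum_{r>i\ge s}a_{rs}$. *)

From HB Require Import structures.
From mathcomp Require Import all_boot all_order all_algebra all_field.
Set Implicit Arguments. Unset Strict Implicit. Unset Printing Implicit Defensive.
Import Order.TTheory GRing.Theory Num.Theory.
Local Open Scope ring_scope.

Definition zmat := int -> int -> nat.

Definition win (W : nat) : seq int :=
  [seq (a%:Z - W%:Z) | a <- iota 0 (2 * W).+1].

(* A \in \hat\Xi_d : n-periodic and sum_{1<=i<=n, j in Z} a_ij = d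
   (the infinite sum is expressed as the eventually constant value of
   the sums over growing windows) *)
Definition inXi (n d : nat) (A : zmat) : Prop :=
  (forall i j : int, A (i + n%:Z) (j + n%:Z) = A i j) /\
  exists W0 : nat, forall W : nat, (W0 <= W)%N ->
    (\sum_(i <- [seq (a.+1)%:Z | a <- iota 0 n]) \sum_(j <- win W) A i j)%N = d.

Definition dA_rel (n : nat) (A : zmat) (x : nat) : Prop :=
  exists W0 : nat, forall W : nat, (W0 <= W)%N ->
    (\sum_(i <- [seq (a.+1)%:Z | a <- iota 0 n])
       \sum_(k <- win W) \sum_(j <- win W) \sum_(l <- win W)
          (if ((k <= i)%R && (j < l)%R) then A i j * A k l else 0))%N = x.

Definition eps_rel (A : zmat) (i : int) (x : int) : Prop :=
  exists W0 : nat, forall W : nat, (W0 <= W)%N ->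
    \sum_(r <- win W) \sum_(s <- win W)
       ((if (r <= i) && (i < s) then (A r s)%:Z else 0)
        - (if (i < r) && (s <= i) then (A r s)%:Z else 0)) = x.

(* index j in {1..n} of the residue class of r, shifted to {0..n-1} *)
Definition resid (n : nat) (r : int) : nat := `|((r - 1) %% n%:Z)%Z|%N.

(* B = sum_{j=1}^n (beta_j E^{j,j} + alpha_j E^{j,j+1});
   alpha_j, beta_j are alpha (j-1), beta (j-1) *)
Definition Bupper (n : nat) (alpha beta : nat -> nat) : zmat :=
  fun r s => if s == r then beta (resid n r)
             else if s == r + 1 then alpha (resid n r) else 0%N.

Definition Blower (n : nat) (alpha beta : nat -> nat) : zmat :=
  fun r s => if s == r then beta (resid n r)
             else if r == s + 1 then alpha (resid n s) else 0%N.

(* Lattices in K^d, K = F((eps)).  We identify K^d with F-valued       *)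
(* functions on Z: index k = a + d*m (0 <= a < d) carries the          *)
(* coefficient of eps^m in the a-th coordinate; eps acts as the shift  *)
(* k |-> k + d.  An O-lattice is an F-subspace stable under eps that   *)
(* contains {x | x k = 0 for k < M} and is contained in                *)
(* {x | x k = 0 for k < -M} for some M.                                *)
Section Lattices.
Variable F : fieldType.

Definition vec := int -> F.
Definition subsp := vec -> Prop.

Definition epsv (d : nat) (x : vec) : vec := fun k => x (k - d%:Z).

Definition tail (M : int) : subsp := fun x => forall k, k < M -> x k = 0.

Definition is_subspace (L : subsp) : Prop :=
  L (fun _ => 0) /\
  (forall x y, L x -> L y -> L (fun k => x k + y k)) /\
  (forall (c : F) x, L x -> L (fun k => c * x k)).

Definition lattice (d : nat) (L : subsp) : Prop :=
  is_subspace L /\ (forall x, L x -> L (epsv d x)) /\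
  exists M : int, (forall x, tail M x -> L x) /\ (forall x, L x -> tail (- M) x).

Definition capS (X Y : subsp) : subsp := fun x => X x /\ Y x.
Definition addS (X Y : subsp) : subsp :=
  fun x => exists y z, X y /\ Y z /\ forall k, x k = y k + z k.

Definition lincomb (m : nat) (c : 'I_m -> F) (v : 'I_m -> vec) : vec :=
  fun k => \sum_(t < m) c t * v t k.

Definition qdim (X Y : subsp) (m : nat) : Prop :=
  exists v : 'I_m -> vec,
    (forall t, X (v t)) /\
    (forall c : 'I_m -> F, Y (lincomb c v) -> forall t, c t = 0) /\
    (forall x, X x -> exists c : 'I_m -> F, Y (fun k => x k - lincomb c v k)).

Definition chain := int -> subsp.

Definition is_chain (n d : nat) (L : chain) : Prop :=
  (forall i, lattice d (L i)) /\
  (forall i x, L (i - 1) x -> L i x) /\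
  (forall i x, L (i + n%:Z) x <-> L i (epsv d x)).

Definition relpos (L L' : chain) (A : zmat) : Prop :=
  forall i j : int,
    qdim (capS (L i) (L' j))
         (addS (capS (L (i - 1)) (L' j)) (capS (L i) (L' (j - 1)))) (A i j).

Definition same_chain (L L' : chain) : Prop := forall i x, L i x <-> L' i x.

Definition has_card (S : chain -> Prop) (m : nat) : Prop :=
  exists f : 'I_m -> chain,
    (forall t, S (f t)) /\
    (forall t u, same_chain (f t) (f u) -> t = u) /\
    (forall L, S L -> exists t, same_chain L (f t)).

End Lattices.

(* Structure constants of the generic affine v-Schur algebra.          *)
(* An element of Z[v,v^-1] is written v^-k p(v) with p : {poly int}.   *)
(* (p,k) is the coefficient Q^C_{B,A} of [C] in [B]*[A] iff for every   *)
(* finite field F with q elements its value at v = sqrt q equals       *)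
(* sqrt q^(d_C - d_B - d_A) times the convolution structure constant,  *)
(* i.e. the number of chains L' with (L,L') in O_B, (L',L'') in O_A,   *)
(* for any (L,L'') in O_C.                                             *)
Definition laurent_eval (p : {poly int}) (k : nat) (z : algC) : algC :=
  (map_poly (fun c : int => c%:~R) p).[z] / z ^+ k.

Definition is_schur_coeff (n d : nat) (B A C : zmat) (p : {poly int}) (k : nat)
  : Prop :=
  forall (F : finFieldType) (L L'' : chain F),
    is_chain n d L -> is_chain n d L'' -> relpos L L'' C ->
    exists m : nat,
      has_card (fun L' => is_chain n d L' /\ relpos L L' B /\ relpos L' L'' A) m /\
      forall dA dB dC : nat, dA_rel n A dA -> dA_rel n B dB -> dA_rel n C dC ->
        laurent_eval p k (sqrtC (#|F|%:R)) =
          (sqrtC (#|F|%:R)) ^ (dC%:Z - dB%:Z - dA%:Z) * m%:R.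

From HB Require Import structures.
From mathcomp Require Import all_boot all_order all_algebra all_field.
From Stdlib Require Import FunctionalExtensionality ClassicalEpsilon Classical.
From mathcomp Require Import zify ring.
From Stdlib Require Import Lia.
Set Implicit Arguments. Unset Strict Implicit. Unset Printing Implicit Defensive.
Import Order.TTheory GRing.Theory Num.Theory.
Local Open Scope ring_scope.

(* [eps_i] of the relative position of two chains [L], [L'] equals
   [dim L_i/(L_i :&: L'_i) - dim L'_i/(L'_i :&: L_i)]: filtering [L_i] by the
   [L_r :&: L'_s + ...] splits this quotient into the pieces of dimension
   [a_rs] with [r <= i < s].  Measured against a small common lattice [T],
   this is [dim L_i/T - dim L'_i/T], hence additive along [L, L', L''].
   If [Q^C_(B,A) <> 0], its value at [v = sqrt P] is nonzero for some prime
   [P]; over [F_P] a pair of coordinate chains in position [C] then has an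
   intermediate chain [L'] with [(L, L')] in position [B] and [(L', L'')] in
   position [A]. *)

Section Subspaces.
Variable F : fieldType.
Implicit Types X Y Z T U : subsp F.

Definition subS X Y := forall x, X x -> Y x.
Definition eqS X Y := forall x, X x <-> Y x.

Lemma subsp_ext X x y : X x -> (forall k, x k = y k) -> X y.
Proof. by move=> Xx /functional_extensionality <-. Qed.

Lemma subsp0 X : is_subspace X -> X (fun _ => 0).
Proof. by case. Qed.
Lemma subspD X x y : is_subspace X -> X x -> X y -> X (fun k => x k + y k).
Proof. by case=> _ [XD _]; apply: XD. Qed.
Lemma subspZ X c x : is_subspace X -> X x -> X (fun k => c * x k).
Proof. by case=> _ [_ XZ]; apply: XZ. Qed.
Lemma subspN X x : is_subspace X -> X x -> X (fun k => - x k).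
Proof. by move=> SX Xx; apply: subsp_ext (subspZ (-1) SX Xx) _ => k; rewrite mulN1r. Qed.
Lemma subspB X x y : is_subspace X -> X x -> X y -> X (fun k => x k - y k).
Proof. by move=> SX Xx Xy; apply: subspD => //; apply: subspN. Qed.

Lemma capS_subspace X Y : is_subspace X -> is_subspace Y -> is_subspace (capS X Y).
Proof.
move=> SX SY; split; first by split; apply: subsp0.
split; first by move=> x y [? ?] [? ?]; split; apply: subspD.
by move=> c x [? ?]; split; apply: subspZ.
Qed.

Lemma addS_subspace X Y : is_subspace X -> is_subspace Y -> is_subspace (addS X Y).
Proof.
move=> SX SY; split.
  exists (fun _ => 0), (fun _ => 0).
  by do 2?split; try exact: subsp0; move=> k; rewrite addr0.
split.
  move=> x y [x1 [x2 [X1 [Y2 Ex]]]] [y1 [y2 [X1' [Y2' Ey]]]].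
  exists (fun k => x1 k + y1 k), (fun k => x2 k + y2 k).
  by do 2?split; try exact: subspD; move=> k; rewrite Ex Ey addrACA.
move=> c x [x1 [x2 [X1 [Y2 Ex]]]].
exists (fun k => c * x1 k), (fun k => c * x2 k).
by do 2?split; try exact: subspZ; move=> k; rewrite Ex mulrDr.
Qed.

Lemma capS_mono X X' Y Y' : subS X X' -> subS Y Y' -> subS (capS X Y) (capS X' Y').
Proof. by move=> sXX' sYY' x [Xx Yx]; split; [apply: sXX' | apply: sYY']. Qed.

Lemma addS_monol X X' Y : subS X X' -> subS (addS X Y) (addS X' Y).
Proof. by move=> sXX' x [y [z [Xy [Yz E]]]]; exists y, z; split; [apply: sXX'|]. Qed.

Lemma addS_idPr X Y : is_subspace X -> is_subspace Y -> subS X Y -> eqS (addS X Y) Y.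
Proof.
move=> SX SY sXY x; split.
  by move=> [y [z [Xy [Yz E]]]]; apply: subsp_ext (subspD SY (sXY _ Xy) Yz) _ => k; rewrite E.
move=> Yx; exists (fun _ => 0), x.
by split; [exact: subsp0 | split=> // k; rewrite add0r].
Qed.

Lemma addS_idPl X Y : is_subspace X -> is_subspace Y -> subS Y X -> eqS (addS X Y) X.
Proof.
move=> SX SY sYX x; split.
  by move=> [y [z [Xy [Yz E]]]]; apply: subsp_ext (subspD SX Xy (sYX _ Yz)) _ => k; rewrite E.
move=> Xx; exists x, (fun _ => 0).
by split=> //; split; [exact: subsp0 | move=> k; rewrite addr0].
Qed.

Lemma addSA_absorb X Y Z : is_subspace Y -> is_subspace Z -> subS Y Z ->
  eqS (addS (addS X Y) Z) (addS X Z).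
Proof.
move=> SY SZ sYZ x; split.
  move=> [y [z [[a [b [Xa [Yb Ey]]]] [Zz E]]]].
  exists a, (fun k => b k + z k).
  by do 2?split => //; [apply: subspD => //; apply: sYZ | move=> k; rewrite E Ey addrA].
move=> [a [z [Xa [Zz E]]]]; exists a, z; split=> //.
exists a, (fun _ => 0).
by do 2?split => //; [apply: subsp0 | move=> k; rewrite addr0].
Qed.

Lemma eq_lincomb m (c1 c2 : 'I_m -> F) v k :
  (forall t, c1 t = c2 t) -> lincomb c1 v k = lincomb c2 v k.
Proof. by move=> E; apply: eq_bigr => t _; rewrite E. Qed.
Lemma lincomb_ord0 (c : 'I_0 -> F) v k : lincomb c v k = 0.
Proof. by rewrite /lincomb big_ord0. Qed.
Lemma lincomb0 m (v : 'I_m -> vec F) k : lincomb (fun _ => 0) v k = 0.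
Proof. by rewrite /lincomb big1 // => t _; rewrite mul0r. Qed.
Lemma lincombZ m a (c : 'I_m -> F) v k :
  lincomb (fun t => a * c t) v k = a * lincomb c v k.
Proof. by rewrite /lincomb mulr_sumr; apply: eq_bigr => t _; rewrite mulrA. Qed.

Lemma subsp_lincomb X m (c : 'I_m -> F) v :
  is_subspace X -> (forall t, X (v t)) -> X (lincomb c v).
Proof.
move=> SX; elim: m c v => [|m IH] c v Xv.
  by apply: subsp_ext (subsp0 SX) _ => k; rewrite lincomb_ord0.
apply: subsp_ext (subspD SX (IH _ _ (fun t => Xv _)) (subspZ (c ord_max) SX (Xv ord_max))) _.
by move=> k; rewrite /lincomb big_ord_recr.
Qed.

Definition catv (A : Type) a b (v : 'I_a -> A) (w : 'I_b -> A) : 'I_(a + b) -> A :=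
  fun t => match split t with inl t1 => v t1 | inr t2 => w t2 end.

Lemma lincomb_cat a b (c : 'I_(a + b) -> F) v w k :
  lincomb c (catv v w) k =
  lincomb (fun t => c (lshift b t)) v k + lincomb (fun t => c (rshift a t)) w k.
Proof.
rewrite /lincomb big_split_ord /catv /=.
by congr (_ + _); apply: eq_bigr => t _; rewrite ?(unsplitK (inl t)) ?(unsplitK (inr t)).
Qed.

Lemma catv_lshift (A : Type) a b (v : 'I_a -> A) (w : 'I_b -> A) t :
  catv v w (lshift b t) = v t.
Proof. by rewrite /catv (unsplitK (inl t)). Qed.
Lemma catv_rshift (A : Type) a b (v : 'I_a -> A) (w : 'I_b -> A) t :
  catv v w (rshift a t) = w t.
Proof. by rewrite /catv (unsplitK (inr t)). Qed.


Definition indep Y m (v : 'I_m -> vec F) :=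
  forall c, Y (lincomb c v) -> forall t, c t = 0.

Lemma qdim_eqS X X' Y Y' m : eqS X X' -> eqS Y Y' -> qdim X Y m -> qdim X' Y' m.
Proof.
move=> EX EY [v [Xv [iv sv]]]; exists v; split; first by move=> t; apply/EX.
split; first by move=> c /EY; apply: iv.
by move=> x /EX /sv [c Yc]; exists c; apply/EY.
Qed.

Lemma qdim0 X Y : is_subspace Y -> subS X Y -> qdim X Y 0.
Proof.
move=> SY sXY; exists (fun _ _ => 0); split; first by case.
split; first by move=> c _; case.
move=> x /sXY Yx; exists (fun _ => 0).
by apply: subsp_ext Yx _ => k; rewrite lincomb_ord0 subr0.
Qed.

(* Expressing the [w t] in the basis [v] modulo [Y], a dependence among the
   coefficient rows in ['rV_a] yields one among the [w t]. *)
Lemma indep_leq X Y a b (w : 'I_b -> vec F) : is_subspace Y ->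
  (forall t, X (w t)) -> indep Y w -> qdim X Y a -> (b <= a)%N.
Proof.
move=> SY Xw iw [v [_ [_ sv]]].
have coef t : {c : 'I_a -> F | Y (fun k => w t k - lincomb c v k)}.
  exact/constructive_indefinite_description/sv/Xw.
pose M := \matrix_(t < b, s < a) sval (coef t) s.
suff /eqP <- : row_free M by apply: rank_leq_col.
apply: inj_row_free => u uM0; apply/rowP => t; rewrite mxE.
have colM0 s : \sum_(t < b) u 0 t * sval (coef t) s = 0.
  move/matrixP: uM0 => /(_ 0 s); rewrite !mxE => E; rewrite -[RHS]E.
  by apply: eq_bigr => t' _; rewrite mxE.
move: t; apply: iw.
pose y t := fun k => w t k - lincomb (sval (coef t)) v k.
have Yy : Y (lincomb (fun t => u 0 t) y).
  by apply: subsp_lincomb => // t'; rewrite /y; case: (coef t').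
apply: subsp_ext Yy _ => k; rewrite /lincomb /y.
under eq_bigr do rewrite mulrBr.
rewrite sumrB [X in _ - X](_ : _ = 0) ?subr0 //.
under eq_bigr do rewrite mulr_sumr.
rewrite exchange_big big1 // => s _.
rewrite (eq_bigr (fun t' => u 0 t' * sval (coef t') s * v s k)) => [|t' _].
  by rewrite -mulr_suml colM0 mul0r.
by rewrite mulrA.
Qed.

Lemma qdim_unique X Y a b : is_subspace Y -> qdim X Y a -> qdim X Y b -> a = b.
Proof.
move=> SY Ha Hb; apply/eqP; rewrite eqn_leq.
case: (Ha) => [v [Xv [iv _]]]; case: (Hb) => [w [Xw [iw _]]].
by rewrite (indep_leq SY Xw iw Ha) (indep_leq SY Xv iv Hb).
Qed.

Lemma qdim_trans X Y Z a b : is_subspace Y -> is_subspace Z -> subS Z Y -> subS Y X ->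
  qdim X Y a -> qdim Y Z b -> qdim X Z (a + b).
Proof.
move=> SY SZ sZY sYX [v [Xv [iv sv]]] [w [Yw [iw sw]]].
exists (catv v w); split.
  by move=> t; rewrite /catv; case: (split t) => t'; [apply: Xv | apply/sYX/Yw].
split.
  move=> c Zc.
  have cl0 t : c (lshift b t) = 0.
    move: t; apply: iv.
    have := subspB SY (sZY _ Zc) (subsp_lincomb (fun t => c (rshift a t)) SY Yw).
    by move=> Yd; apply: subsp_ext Yd _ => k; rewrite lincomb_cat addrK.
  have cr0 t : c (rshift a t) = 0.
    move: t; apply: iw; apply: subsp_ext Zc _ => k.
    by rewrite lincomb_cat (eq_lincomb _ _ cl0) lincomb0 add0r.
  by move=> t; rewrite -(splitK t); case: (split t) => t' /=; [exact: cl0 | exact: cr0].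
move=> x /sv [c1 Yc1]; have [c2 Zc2] := sw _ Yc1.
exists (catv c1 c2); apply: subsp_ext Zc2 _ => k.
rewrite lincomb_cat (eq_lincomb _ _ (catv_lshift c1 c2)).
by rewrite (eq_lincomb _ _ (catv_rshift c1 c2)) opprD addrA.
Qed.

Lemma qdim_addS X Y Z a : is_subspace X -> is_subspace Y -> is_subspace Z ->
  subS Y X -> subS (capS X Z) Y -> qdim X Y a -> qdim (addS X Z) (addS Y Z) a.
Proof.
move=> SX SY SZ sYX sXZY [v [Xv [iv sv]]].
exists v; split.
  move=> t; exists (v t), (fun _ => 0).
  by split=> //; split; [exact: subsp0 | move=> k; rewrite addr0].
split.
  move=> c [y [z [Yy [Zz E]]]]; apply: iv.
  have Xz : X z.
    apply: subsp_ext (subspB SX (subsp_lincomb c SX Xv) (sYX _ Yy)) _ => k.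
    by rewrite E addrC addKr.
  by apply: subsp_ext (subspD SY Yy (sXZY _ (conj Xz Zz))) _ => k; rewrite E.
move=> x [x1 [z1 [Xx1 [Zz1 E]]]]; have [c Yc] := sv _ Xx1.
exists c, (fun k => x1 k - lincomb c v k), z1.
by split=> //; split=> // k; rewrite E addrAC.
Qed.

Lemma qdim_filtration (G : nat -> subsp F) (g : nat -> nat) N :
  (forall k, is_subspace (G k)) -> (forall k, subS (G k) (G k.+1)) ->
  (forall k, (k < N)%N -> qdim (G k.+1) (G k) (g k)) ->
  qdim (G N) (G 0%N) (\sum_(k < N) g k).
Proof.
move=> SG sG; elim: N => [|N IH] step; first by rewrite big_ord0; apply: qdim0.
have sG0 j : subS (G 0%N) (G j) by elim: j => [|j IHj] x // /IHj /sG.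
rewrite big_ord_recr /= addnC.
apply: (qdim_trans (SG _) (SG _) (sG0 _) (sG _) (step _ (ltnSn _))).
by apply: IH => k ltkN; apply/step/ltnW.
Qed.

Lemma exists_maximal (P : nat -> Prop) m :
  P 0%N -> (forall k, P k -> (k <= m)%N) -> exists k, P k /\ ~ P k.+1.
Proof.
move=> P0 bound.
have step t : (exists k, P k /\ ~ P k.+1) \/ P t.
  elim: t => [|t [|Pt]]; [by right | by left |].
  by case: (classic (P t.+1)) => [|nPt]; [right | left; exists t].
by case: (step m.+1) => // /bound; rewrite ltnn.
Qed.

(* A maximal independent family in [Z] spans it. *)
Lemma qdim_exists T Z U m : is_subspace T -> is_subspace Z -> subS T Z -> subS Z U ->
  qdim U T m -> exists a, qdim Z T a.
Proof.
move=> ST SZ sTZ sZU HU.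
pose P k := exists w : 'I_k -> vec F, (forall t, Z (w t)) /\ indep T w.
have P0 : P 0%N by exists (fun _ _ => 0); split; [case | move=> c _; case].
have bound k : P k -> (k <= m)%N.
  by move=> [w [Zw iw]]; apply: indep_leq ST _ iw HU => t; apply/sZU/Zw.
have [a [[w [Zw iw]] maxa]] := exists_maximal P0 bound.
exists a; exists w; split=> //; split=> // z Zz.
pose w' := catv w (fun _ : 'I_1 => z).
have [c [Tc [t ct0]]] : exists c, T (lincomb c w') /\ exists t, c t <> 0.
  apply: NNPP => indep_w'; apply: maxa; rewrite -addn1; exists w'; split.
    by move=> t; rewrite /w' /catv; case: (split t) => t'; [apply: Zw | apply: Zz].
  move=> c Tc t; apply: NNPP => ct0; apply: indep_w'.
  by exists c; split=> //; exists t.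
have lin k : lincomb c w' k = lincomb (fun t => c (lshift 1 t)) w k + c (rshift a ord0) * z k.
  by rewrite lincomb_cat /lincomb big_ord1.
have cz0 : c (rshift a ord0) != 0.
  apply/eqP => cz; apply: ct0; rewrite -(splitK t); case: (split t) => t' /=.
    move: t'; apply: iw; apply: subsp_ext Tc _ => k.
    by rewrite lin cz mul0r addr0.
  by rewrite (ord1 t').
exists (fun t => - (c (rshift a ord0))^-1 * c (lshift 1 t)).
apply: subsp_ext (subspZ (c (rshift a ord0))^-1 ST Tc) _ => k.
by rewrite lin lincombZ mulrDr mulrA mulVf // mul1r mulNr addrC opprK.
Qed.

Definition unitv (j : int) : vec F := fun k => if k == j then 1 else 0.

Lemma lincomb_unitv m (f : 'I_m -> int) (c : 'I_m -> F) t0 :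
  injective f -> lincomb c (fun t => unitv (f t)) (f t0) = c t0.
Proof.
move=> finj; rewrite /lincomb (bigD1 t0) //= /unitv eqxx mulr1 big1 ?addr0 //.
move=> t /negbTE tt0; case: eqP => [/finj E|_]; last by rewrite mulr0.
by rewrite E eqxx in tt0.
Qed.

Lemma lincomb_unitv_out m (f : 'I_m -> int) (c : 'I_m -> F) k :
  (forall t, f t != k) -> lincomb c (fun t => unitv (f t)) k = 0.
Proof.
move=> fk; rewrite /lincomb big1 // => t _; rewrite /unitv.
by case: eqP => [E|_]; [have := fk t; rewrite E eqxx | rewrite mulr0].
Qed.

Lemma tail_subspace M : is_subspace (@tail F M).
Proof.
split; first by [].
split; first by move=> x y Hx Hy k Hk; rewrite Hx // Hy // addr0.
by move=> c x Hx k Hk; rewrite Hx // mulr0.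
Qed.

Lemma tail_mono (a b : int) : a <= b -> subS (@tail F b) (tail a).
Proof. by move=> le_ab x Hx k Hk; apply: Hx; apply: lt_le_trans le_ab. Qed.

Lemma qdim_tail (M1 M2 : int) : M1 <= M2 -> qdim (@tail F M1) (tail M2) `|M2 - M1|%N.
Proof.
move=> le12.
pose f (t : 'I_`|M2 - M1|%N) : int := M1 + (t : nat)%:Z.
have finj : injective f by move=> t1 t2 /addrI /eqP; rewrite eqz_nat => /eqP /val_inj.
exists (fun t => unitv (f t)); split.
  move=> t k Hk; rewrite /unitv; case: eqP => // Ek.
  by move: Hk; rewrite Ek /f; lia.
split.
  move=> c Hc t; rewrite -(lincomb_unitv c t finj); apply: Hc.
  have := ltn_ord t; rewrite /f; lia.
move=> x Hx; exists (fun t => x (f t)) => k Hk.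
case: (ltP k M1) => [kM1|M1k].
  rewrite Hx // lincomb_unitv_out ?subr0 // => t; apply/eqP => Et.
  by move: kM1; rewrite -Et /f; lia.
have Ht : (`|k - M1| < `|M2 - M1|)%N by lia.
have -> : k = f (Ordinal Ht) by rewrite /f /=; lia.
by rewrite lincomb_unitv // subrr.
Qed.

End Subspaces.

Lemma mem_win (W : nat) (x : int) : (x \in win W) = (- W%:Z <= x) && (x <= W%:Z).
Proof.
apply/mapP/andP => [[a Ha ->]|[h1 h2]]; first by move: Ha; rewrite mem_iota; lia.
by exists (absz (x + W%:Z)); [rewrite mem_iota|]; lia.
Qed.

Lemma uniq_win W : uniq (win W).
Proof. by rewrite map_inj_uniq ?iota_uniq // => a b /addIr /eqP; rewrite eqz_nat => /eqP. Qed.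

Lemma big_win_restrict (R : Type) (idx : R) (op : Monoid.com_law idx) (g : int -> R)
  (lo : int) (N W : nat) :
  (forall x, (x < lo) || (lo + N%:Z <= x) -> g x = idx) ->
  - (W%:Z) <= lo -> lo + N%:Z <= W%:Z + 1 ->
  \big[op/idx]_(x <- win W) g x = \big[op/idx]_(k < N) g (lo + k%:Z).
Proof.
move=> g_out lo_ge lo_le.
set off := absz (lo + W%:Z).
rewrite /win big_map (_ : iota 0 _ = index_iota 0 (2 * W).+1); last by rewrite /index_iota subn0.
rewrite (big_cat_nat _ (n := off)) //=; last by rewrite /off; lia.
rewrite (big_cat_nat _ (m := off) (n := off + N)) /= ?leq_addr //; last by rewrite /off; lia.
rewrite big1_seq => [|a /andP [_]]; last first.
  by rewrite mem_index_iota => /andP [_ lt_a]; apply: g_out; move: lt_a; rewrite /off; lia.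
rewrite [X in op _ (op _ X)]big1_seq => [|a /andP [_]]; last first.
  by rewrite mem_index_iota => /andP [le_a _]; apply: g_out; move: le_a; rewrite /off; lia.
rewrite Monoid.mul1m Monoid.mulm1 -{1}[off]add0n big_addn addKn big_mkord.
by apply: eq_bigr => k _; congr g; rewrite /off; lia.
Qed.

Lemma big_win_stable (R : Type) (idx : R) (op : Monoid.com_law idx) (g : int -> R)
  (W0 W : nat) :
  (forall x, (x < - W0%:Z) || (W0%:Z < x) -> g x = idx) -> (W0 <= W)%N ->
  \big[op/idx]_(x <- win W) g x = \big[op/idx]_(x <- win W0) g x.
Proof.
move=> g_out le_W0W; have g_out' x : (x < - W0%:Z) || (- W0%:Z + (2 * W0).+1%:Z <= x) -> g x = idx.
  by move=> /orP [] ?; apply: g_out; apply/orP; [left | right]; lia.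
by rewrite !(@big_win_restrict _ _ op g (- W0%:Z) (2 * W0).+1) //; lia.
Qed.

Section Chains.
Variable F : fieldType.
Variables n d : nat.
Implicit Types L : chain F.

Lemma chain_subspace L i : is_chain n d L -> is_subspace (L i).
Proof. by case=> latL _; case: (latL i). Qed.

Lemma chain_capS_subspace L L' i j : is_chain n d L -> is_chain n d L' ->
  is_subspace (capS (L i) (L' j)).
Proof. by move=> CL CL'; apply: capS_subspace; apply: chain_subspace. Qed.

Lemma chain_mono L i j : is_chain n d L -> i <= j -> subS (L i) (L j).
Proof.
move=> [_ [Lpred _]] le_ij.
have Lup (t : nat) : subS (L i) (L (i + t%:Z)).
  elim: t => [|t IH]; first by rewrite addr0.
  move=> x /IH Lx; have := Lpred (i + t.+1%:Z) x.
  by rewrite (_ : i + t.+1%:Z - 1 = i + t%:Z); [apply | lia].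
by have := Lup (absz (j - i)); rewrite (_ : i + (absz (j - i))%:Z = j) //; lia.
Qed.

Lemma chain_bounds L i : is_chain n d L ->
  exists M, subS (tail M) (L i) /\ subS (L i) (tail (- M)).
Proof. by case=> latL _; case: (latL i) => _ [_ [M [? ?]]]; exists M. Qed.

Lemma epsv_shift (y : vec F) : epsv d (fun k => y (k + d%:Z)) = y.
Proof. by apply: functional_extensionality => k; rewrite /epsv subrK. Qed.

(* Each period [L_(i-n) = eps L_i] moves the support up by [d] coordinates. *)
Lemma chain_shrink L N : (0 < d)%N -> is_chain n d L -> exists r, subS (L r) (tail N).
Proof.
move=> d_gt0 [latL [_ Lper]]; case: (latL 0) => _ [_ [M [_ LM]]].
have Ldown (t : nat) : subS (L (- (t%:Z * n%:Z))) (tail (- M + t%:Z * d%:Z)).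
  elim: t => [|t IH]; first by move=> x; rewrite mul0r oppr0 mul0r addr0; apply: LM.
  move=> y Ly.
  have Lx : L (- (t%:Z * n%:Z)) (fun k => y (k + d%:Z)).
    have := (Lper (- (t.+1%:Z * n%:Z)) (fun k => y (k + d%:Z))).2.
    rewrite epsv_shift => /(_ Ly).
    by rewrite (_ : - (t.+1%:Z * n%:Z) + n%:Z = - (t%:Z * n%:Z)) // intS; ring.
  move=> k lt_k; have := IH _ Lx (k - d%:Z); rewrite subrK; apply.
  by move: lt_k; rewrite intS mulrDl mul1r; lia.
exists (- ((absz (N + M))%:Z * n%:Z)) => x /Ldown Lx; apply: tail_mono Lx.
have : 1 <= d%:Z by rewrite lez_nat.
nia.
Qed.

Lemma chain_grow L N : (0 < d)%N -> is_chain n d L -> exists s, subS (tail N) (L s).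
Proof.
move=> d_gt0 [latL [_ Lper]]; case: (latL 0) => _ [_ [M [ML _]]].
have Lup (t : nat) : subS (tail (M - t%:Z * d%:Z)) (L (t%:Z * n%:Z)).
  elim: t => [|t IH]; first by move=> x; rewrite !mul0r subr0; apply: ML.
  move=> z tz; have := (Lper (t%:Z * n%:Z) z).2.
  rewrite (_ : t%:Z * n%:Z + n%:Z = t.+1%:Z * n%:Z); last by rewrite intS; ring.
  apply; apply: IH => k lt_k; apply: tz.
  by move: lt_k; rewrite intS mulrDl mul1r; lia.
exists ((absz (M - N))%:Z * n%:Z) => x tx; apply: Lup; apply: tail_mono tx.
have : 1 <= d%:Z by rewrite lez_nat.
nia.
Qed.

Lemma chain_below L L' i : (0 < d)%N -> is_chain n d L -> is_chain n d L' ->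
  exists N : nat, subS (L (i - N%:Z)) (L' i).
Proof.
move=> d_gt0 CL CL'; have [M [ML' _]] := chain_bounds i CL'.
have [r Lr] := chain_shrink M d_gt0 CL.
exists (absz (i - r)) => x Lx; apply/ML'/Lr; apply: chain_mono Lx => //; lia.
Qed.

Lemma chain_above L L' i : (0 < d)%N -> is_chain n d L -> is_chain n d L' ->
  exists N : nat, subS (L i) (L' (i + N%:Z)).
Proof.
move=> d_gt0 CL CL'; have [M [_ LM]] := chain_bounds i CL.
have [s L's] := chain_grow (- M) d_gt0 CL'.
exists (absz (s - i)) => x /LM /L's; apply: chain_mono => //; lia.
Qed.

Lemma relpos_eq0 L L' (X : zmat) r s : is_chain n d L -> is_chain n d L' ->
  relpos L L' X -> subS (L r) (L' (s - 1)) -> X r s = 0%N.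
Proof.
move=> CL CL' posX sub_rs.
have SY := addS_subspace (chain_capS_subspace (r - 1) s CL CL') (chain_capS_subspace r (s - 1) CL CL').
apply: (qdim_unique SY (posX r s)); apply: qdim0 => // x [Lx L'x].
exists (fun _ => 0), x; split; first exact: subsp0 (chain_capS_subspace _ _ CL CL').
by split; [split => //; apply: sub_rs | move=> k; rewrite add0r].
Qed.

Lemma relpos_tr L L' (X : zmat) : relpos L L' X -> relpos L' L (fun r s => X s r).
Proof.
move=> posX r s; apply: qdim_eqS (posX s r); first by move=> x; split; case.
by move=> x; split=> -[y [z [[? ?] [[? ?] E]]]];
  exists z, y; do 2?split => //; move=> k; rewrite E addrC.
Qed.

Section Relpos.
Variables (L L' : chain F) (X : zmat).
Hypotheses (CL : is_chain n d L) (CL' : is_chain n d L') (posX : relpos L L' X).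

Let SC := fun i j => chain_capS_subspace i j CL CL'.

(* By the modular law, the quotient defining [X (r + 1) s] is also a step of
   the filtration of [L_i :&: L'_s] by the [L_r :&: L'_s + L_i :&: L'_(s-1)]. *)
Lemma relpos_step r i s : r + 1 <= i ->
  qdim (addS (capS (L (r + 1)) (L' s)) (capS (L i) (L' (s - 1))))
       (addS (capS (L r) (L' s)) (capS (L i) (L' (s - 1)))) (X (r + 1) s).
Proof.
move=> le_ri.
have Lr1 : subS (L r) (L (r + 1)) by apply: chain_mono => //; lia.
have L's1 : subS (L' (s - 1)) (L' s) by apply: chain_mono => //; lia.
have sYX : subS (addS (capS (L r) (L' s)) (capS (L (r + 1)) (L' (s - 1))))
                (capS (L (r + 1)) (L' s)).
  move=> x [y [z [[Ly L'y] [[Lz L'z] E]]]]; split.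
    by apply: subsp_ext (subspD (chain_subspace _ CL) (Lr1 _ Ly) Lz) _ => k; rewrite E.
  by apply: subsp_ext (subspD (chain_subspace _ CL') L'y (L's1 _ L'z)) _ => k; rewrite E.
have sXZY : subS (capS (capS (L (r + 1)) (L' s)) (capS (L i) (L' (s - 1))))
                 (addS (capS (L r) (L' s)) (capS (L (r + 1)) (L' (s - 1)))).
  move=> x [[Lx _] [_ L'x]]; exists (fun _ => 0), x; split; first exact: subsp0 (SC _ _).
  by split; [split | move=> k; rewrite add0r].
have := posX (r + 1) s; rewrite addrK => posXrs.
have := qdim_addS (SC _ s) (addS_subspace (SC _ _) (SC _ _)) (SC i (s - 1)) sYX sXZY posXrs.
apply: qdim_eqS => //; apply: addSA_absorb (SC _ _) (SC _ _) _.
by apply: capS_mono => //; apply: chain_mono.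
Qed.

Lemma relpos_column R N s : subS (L R) (L' (s - 1)) ->
  qdim (capS (L (R + N%:Z)) (L' s)) (capS (L (R + N%:Z)) (L' (s - 1)))
       (\sum_(k < N) X (R + k%:Z + 1)%R s).
Proof.
move=> sub_Rs; set i := R + N%:Z.
pose G (k : nat) := addS (capS (L (R + k%:Z)) (L' s)) (capS (L i) (L' (s - 1))).
have SG k : is_subspace (G k) by apply: addS_subspace.
have sG k : subS (G k) (G k.+1).
  by apply: addS_monol; apply: capS_mono => //; apply: chain_mono => //; lia.
have step k : (k < N)%N -> qdim (G k.+1) (G k) (X (R + k%:Z + 1) s).
  move=> lt_kN; rewrite /G (_ : R + k.+1%:Z = R + k%:Z + 1); last lia.
  by apply: relpos_step; rewrite /i; lia.
apply: qdim_eqS (qdim_filtration SG sG step).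
  rewrite /G -/i; apply: addS_idPl; [exact: SC | exact: SC |].
  by apply: capS_mono => //; apply: chain_mono => //; lia.
rewrite /G addr0; apply: addS_idPr; [exact: SC | exact: SC | move=> x [Lx _]; split].
  by apply: chain_mono Lx => //; rewrite /i; lia.
by apply: chain_mono (sub_Rs _ Lx) => //; lia.
Qed.

Lemma relpos_block i Nr Ns :
  subS (L (i - Nr%:Z)) (L' i) -> subS (L i) (L' (i + Ns%:Z)) ->
  qdim (L i) (capS (L i) (L' i))
       (\sum_(t < Ns) \sum_(k < Nr) X (i - Nr%:Z + k%:Z + 1)%R (i + t%:Z + 1)%R).
Proof.
move=> below above.
pose H (t : nat) := capS (L i) (L' (i + t%:Z)).
have SH t : is_subspace (H t) by apply: SC.
have sH t : subS (H t) (H t.+1) by apply: capS_mono => //; apply: chain_mono => //; lia.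
have step t : (t < Ns)%N ->
    qdim (H t.+1) (H t) (\sum_(k < Nr) X (i - Nr%:Z + k%:Z + 1)%R (i + t%:Z + 1)%R).
  move=> _; have := @relpos_column (i - Nr%:Z) Nr (i + t%:Z + 1).
  rewrite /H addrK (_ : i - Nr%:Z + Nr%:Z = i); last lia.
  rewrite (_ : i + t.+1%:Z = i + t%:Z + 1); last lia.
  by apply=> x /below; apply: chain_mono => //; lia.
apply: qdim_eqS (qdim_filtration SH sH step); last by rewrite /H addr0.
by move=> x; split=> [[]|Lx] //; split => //; apply: above.
Qed.

End Relpos.

End Chains.

Definition possum (X : zmat) (i : int) (W : nat) : int :=
  \sum_(r <- win W) \sum_(s <- win W) (if (r <= i) && (i < s) then (X r s)%:Z else 0).

Section Additivity.
Variable F : fieldType.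
Variables n d : nat.
Implicit Types L : chain F.

Lemma possum_block L L' (X : zmat) i (Nr Ns : nat) :
  is_chain n d L -> is_chain n d L' -> relpos L L' X ->
  subS (L (i - Nr%:Z)) (L' i) -> subS (L i) (L' (i + Ns%:Z)) ->
  forall W : nat, (absz (i - Nr%:Z)%R + absz (i + Ns%:Z)%R <= W)%N ->
  possum X i W =
    (\sum_(t < Ns) \sum_(k < Nr) X (i - Nr%:Z + k%:Z + 1)%R (i + t%:Z + 1)%R)%N%:Z.
Proof.
move=> CL CL' posX below above W le_W.
have X0 r s : subS (L r) (L' (s - 1)) -> (X r s)%:Z = 0.
  by move=> sub_rs; rewrite (relpos_eq0 CL CL' posX sub_rs).
have row r : r <= i ->
    \sum_(s <- win W) (if (r <= i) && (i < s) then (X r s)%:Z else 0) =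
    \sum_(t < Ns) (X r (i + t%:Z + 1)%R)%:Z.
  move=> le_ri; rewrite (@big_win_restrict _ _ _ _ (i + 1) Ns W); last 3 first.
  - move=> s /orP [] lt_s; first by rewrite ifF //; lia.
    case: ifP => // _; apply: X0 => x Lx.
    have le_s : i + Ns%:Z <= s - 1 by lia.
    exact: (chain_mono CL' le_s (above _ (chain_mono CL le_ri Lx))).
  - by lia.
  - by lia.
  apply: eq_bigr => t _; rewrite le_ri /= ifT; last lia.
  by rewrite (addrAC i).
rewrite /possum (@big_win_restrict _ _ _ _ (i - Nr%:Z + 1) Nr W); last 3 first.
- move=> r /orP [] lt_r; last by apply: big1 => s _; rewrite ifF //; lia.
  apply: big1 => s _; case: ifP => // /andP [_ lt_is].
  have le_r : r <= i - Nr%:Z by lia.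
  have le_s : i <= s - 1 by lia.
  by apply: X0 => x Lx; exact: (chain_mono CL' le_s (below _ (chain_mono CL le_r Lx))).
- by lia.
- by lia.
rewrite (eq_bigr (fun k : 'I_Nr => \sum_(t < Ns) (X (i - Nr%:Z + k%:Z + 1) (i + t%:Z + 1)%R)%:Z)).
  rewrite exchange_big -[RHS]natz natr_sum; apply: eq_bigr => t _.
  by rewrite natr_sum; apply: eq_bigr => k _; rewrite natz.
move=> k _; have lt_kNr := ltn_ord k; rewrite row; last lia.
by rewrite (addrAC (i - Nr%:Z)).
Qed.

Lemma possum_qdim L L' (X : zmat) i : (0 < d)%N ->
  is_chain n d L -> is_chain n d L' -> relpos L L' X ->
  exists a W0, qdim (L i) (capS (L i) (L' i)) a /\
               forall W, (W0 <= W)%N -> possum X i W = a%:Z.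
Proof.
move=> d_gt0 CL CL' posX.
have [Nr below] := chain_below i d_gt0 CL CL'.
have [Ns above] := chain_above i d_gt0 CL CL'.
exists (\sum_(t < Ns) \sum_(k < Nr) X (i - Nr%:Z + k%:Z + 1)%R (i + t%:Z + 1)%R)%N.
exists (absz (i - Nr%:Z)%R + absz (i + Ns%:Z)%R)%N.
split; first exact: (relpos_block CL CL' posX below above).
exact: (possum_block CL CL' posX below above).
Qed.

Lemma eps_relpos L L' (X : zmat) i : (0 < d)%N ->
  is_chain n d L -> is_chain n d L' -> relpos L L' X ->
  exists a b, [/\ qdim (L i) (capS (L i) (L' i)) a,
                  qdim (L' i) (capS (L' i) (L i)) b & eps_rel X i (a%:Z - b%:Z)].
Proof.
move=> d_gt0 CL CL' posX.
have [a [W1 [qa possumX]]] := possum_qdim i d_gt0 CL CL' posX.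
have [b [W2 [qb possumXT]]] := possum_qdim i d_gt0 CL' CL (relpos_tr posX).
exists a, b; split=> //; exists (maxn W1 W2) => W; rewrite geq_max => /andP [le1 le2].
rewrite -(possumX W) // -(possumXT W) // /possum; under eq_bigr do rewrite sumrB.
rewrite sumrB [X in _ - X]exchange_big.
by congr (_ - _); apply: eq_bigr => r _; apply: eq_bigr => s _; rewrite andbC.
Qed.

Lemma qdim_diff_capS (X Y T U : subsp F) m a b dX dY :
  is_subspace X -> is_subspace Y -> is_subspace T ->
  subS T X -> subS T Y -> subS X U -> subS Y U -> qdim U T m ->
  qdim X (capS X Y) a -> qdim Y (capS Y X) b -> qdim X T dX -> qdim Y T dY ->
  a%:Z - b%:Z = dX%:Z - dY%:Z.
Proof.
move=> SX SY ST sTX sTY sXU sYU qU qa qb qX qY.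
have SXY := capS_subspace SX SY; have SYX := capS_subspace SY SX.
have sTXY : subS T (capS X Y) by move=> x Tx; split; [apply: sTX | apply: sTY].
have sTYX : subS T (capS Y X) by move=> x Tx; split; [apply: sTY | apply: sTX].
have [e qe] : exists e, qdim (capS X Y) T e.
  by apply: (qdim_exists ST SXY sTXY _ qU) => x [/sXU].
have qe' : qdim (capS Y X) T e by apply: qdim_eqS qe => // x; split; case.
have <- := qdim_unique ST (qdim_trans SXY ST sTXY (fun x Hx => proj1 Hx) qa qe) qX.
have <- := qdim_unique ST (qdim_trans SYX ST sTYX (fun x Hx => proj1 Hx) qb qe') qY.
lia.
Qed.

Lemma chain_tail_bounds L i : is_chain n d L ->
  exists M0 : nat, forall M : nat, (M0 <= M)%N ->
    subS (tail M%:Z) (L i) /\ subS (L i) (tail (- M%:Z)).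
Proof.
move=> CL; have [M [tL Lt]] := chain_bounds i CL.
exists (absz M) => M' le_M'; split => x.
  by move=> /(tail_mono (_ : M <= M'%:Z)) tx; apply: tL; apply: tx; lia.
by move=> /Lt; apply: tail_mono; lia.
Qed.

Lemma eps_additive (L L' L'' : chain F) (A B C : zmat) i : (0 < d)%N ->
  is_chain n d L -> is_chain n d L' -> is_chain n d L'' ->
  relpos L L' B -> relpos L' L'' A -> relpos L L'' C ->
  exists x y, [/\ eps_rel C i (x + y), eps_rel A i x & eps_rel B i y].
Proof.
move=> d_gt0 CL CL' CL'' posB posA posC.
have [a1 [b1 [qa1 qb1 epsB]]] := eps_relpos i d_gt0 CL CL' posB.
have [a2 [b2 [qa2 qb2 epsA]]] := eps_relpos i d_gt0 CL' CL'' posA.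
have [a3 [b3 [qa3 qb3 epsC]]] := eps_relpos i d_gt0 CL CL'' posC.
exists (a2%:Z - b2%:Z), (a1%:Z - b1%:Z); split => //.
have [M1 bd1] := chain_tail_bounds i CL.
have [M2 bd2] := chain_tail_bounds i CL'.
have [M3 bd3] := chain_tail_bounds i CL''.
pose M := (M1 + M2 + M3)%N.
have [tL Lt] := bd1 M ltac:(rewrite /M; lia).
have [tL' L't] := bd2 M ltac:(rewrite /M; lia).
have [tL'' L''t] := bd3 M ltac:(rewrite /M; lia).
have qU := @qdim_tail F (- M%:Z) M ltac:(lia).
have ST := @tail_subspace F M.
have SL := chain_subspace i CL; have SL' := chain_subspace i CL'.
have SL'' := chain_subspace i CL''.
have [dL qL] := qdim_exists ST SL tL Lt qU.
have [dL' qL'] := qdim_exists ST SL' tL' L't qU.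
have [dL'' qL''] := qdim_exists ST SL'' tL'' L''t qU.
have E1 := qdim_diff_capS SL SL' ST tL tL' Lt L't qU qa1 qb1 qL qL'.
have E2 := qdim_diff_capS SL' SL'' ST tL' tL'' L't L''t qU qa2 qb2 qL' qL''.
have E3 := qdim_diff_capS SL SL'' ST tL tL'' Lt L''t qU qa3 qb3 qL qL''.
by rewrite (_ : _ + _ = a3%:Z - b3%:Z) //; lia.
Qed.

End Additivity.

Definition rows (n : nat) : seq int := [seq (a.+1)%:Z | a <- iota 0 n].

Lemma mem_rows n (i : int) : (i \in rows n) = (1 <= i) && (i <= n%:Z).
Proof.
apply/mapP/andP => [[a Ha ->]|[h1 h2]]; first by move: Ha; rewrite mem_iota; lia.
by exists (absz (i - 1)); [rewrite mem_iota|]; lia.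
Qed.

Lemma uniq_rows n : uniq (rows n).
Proof. by rewrite map_inj_uniq ?iota_uniq // => a b /eqP; rewrite eqz_nat eqSS => /eqP. Qed.

Lemma win_stable_support (g : int -> nat) (W0 : nat) :
  (forall W, (W0 <= W)%N -> \sum_(x <- win W) g x = \sum_(x <- win W0) g x)%N ->
  forall x, g x <> 0%N -> x \in win W0.
Proof.
move=> g_stable x gx0; apply/negPn/negP => x_out.
have le_W0 := leq_maxl W0 (absz x).
have := g_stable _ le_W0; rewrite (bigID (mem (win W0))) /= -big_filter.
rewrite (perm_big (win W0)) => [/eqP|]; last first.
  apply: uniq_perm; rewrite ?filter_uniq ?uniq_win // => y.
  by rewrite mem_filter !mem_win; lia.
rewrite -[X in _ == X]addn0 eqn_add2l sum_nat_seq_eq0 => /allP /(_ x).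
by rewrite mem_win x_out => /(_ ltac:(lia)) /eqP.
Qed.

Lemma periodic_shift n (A : zmat) : (forall i j : int, A (i + n%:Z) (j + n%:Z) = A i j) ->
  forall (t i j : int), A (i + n%:Z * t) (j + n%:Z * t) = A i j.
Proof.
move=> Aper.
have Aper_nat (t : nat) i j : A (i + n%:Z * t%:Z) (j + n%:Z * t%:Z) = A i j.
  elim: t i j => [|t IH] i j; first by rewrite mulr0 !addr0.
  by rewrite -(IH i j) -[RHS]Aper; congr A; rewrite intS; ring.
case=> t i j; first exact: Aper_nat.
rewrite -(Aper_nat t.+1) NegzE intS; congr A; ring.
Qed.

Lemma periodic_reduce n (A : zmat) r s : (0 < n)%N ->
  (forall i j : int, A (i + n%:Z) (j + n%:Z) = A i j) ->
  exists i j, [/\ 1 <= i <= n%:Z, `|r - s| = `|i - j| & A r s = A i j].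
Proof.
move=> n_gt0 Aper; have := divz_eq (r - 1) n%:Z.
set q := ((r - 1) %/ n%:Z)%Z; set m := ((r - 1) %% n%:Z)%Z => E.
have m_ge0 : 0 <= m by apply: modz_ge0; lia.
have m_lt : m < n%:Z by apply: ltz_pmod; lia.
exists (m + 1), (s - n%:Z * q); split; first by lia.
  by congr `|_|; lia.
by rewrite -[RHS](periodic_shift Aper q); congr A; lia.
Qed.

Section Xi.
Variables n d : nat.
Hypothesis n_gt0 : (0 < n)%N.
Variable A : zmat.
Hypothesis AXi : inXi n d A.

Lemma inXi_support : exists W0 : nat,
  (forall i j, i \in rows n -> A i j <> 0%N -> j \in win W0) /\
  (\sum_(i <- rows n) \sum_(j <- win W0) A i j)%N = d.
Proof.
have [_ [W0 sumA]] := AXi; exists W0; split=> [i j row_i Aij0|]; last exact: sumA.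
pose g j := (\sum_(i <- rows n) A i j)%N.
apply: (@win_stable_support g) => [W le_W|].
  by rewrite /g exchange_big sumA // exchange_big sumA.
rewrite /g => /eqP; rewrite sum_nat_seq_eq0 => /allP /(_ i row_i) /eqP.
exact: Aij0.
Qed.

Lemma inXi_band : exists D : nat, forall r s, A r s <> 0%N -> `|r - s| <= D%:Z.
Proof.
have [W0 [Asupp _]] := inXi_support; exists (W0 + n)%N => r s.
have [i [j [row_i -> ->]]] := periodic_reduce r s n_gt0 AXi.1.
move=> /(Asupp i j); rewrite mem_rows row_i mem_win => /(_ isT); lia.
Qed.

Lemma inXi0 : d = 0%N -> forall r s, A r s = 0%N.
Proof.
move=> d0 r s; have [W0 [Asupp sumA]] := inXi_support.
have [i [j [row_i _ ->]]] := periodic_reduce r s n_gt0 AXi.1.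
apply/eqP/negPn/negP => /eqP Aij0.
move/eqP: sumA; rewrite d0 sum_nat_seq_eq0 => /allP /(_ i).
rewrite mem_rows row_i => /(_ isT); rewrite sum_nat_seq_eq0 => /allP /(_ j).
by rewrite (Asupp i j) ?mem_rows // => /(_ isT) /eqP.
Qed.

(* Every summand of [d_A] vanishes unless its indices lie within [n + 2D]
   of the origin, [D] being the band width of [A]. *)
Lemma dA_exists : exists x, dA_rel n A x.
Proof.
have [D band] := inXi_band; set W0 := (n + 2 * D + 1)%N.
have supp i k j l : i \in rows n ->
    (if ((k <= i)%R && (j < l)%R) then A i j * A k l else 0)%N <> 0%N ->
    [&& k \in win W0, j \in win W0 & l \in win W0].
  rewrite mem_rows !mem_win => /andP [i_ge1 i_le].
  case: ifP => // /andP [le_ki lt_jl] /eqP; rewrite muln_eq0 negb_or.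
  move=> /andP [/eqP /band Aij /eqP /band Akl]; move: Aij Akl; rewrite -!abszE; lia.
eexists; exists W0 => W le_W; apply: eq_big_seq => i row_i.
rewrite (@big_win_stable _ _ _ _ W0 W) // => [|k k_out]; last first.
  apply: big1 => j _; apply: big1 => l _; apply/eqP/negPn/negP => /eqP /(supp _ _ _ _ row_i).
  by rewrite mem_win; lia.
apply: eq_bigr => k _; rewrite (@big_win_stable _ _ _ _ W0 W) // => [|j j_out]; last first.
  apply: big1 => l _; apply/eqP/negPn/negP => /eqP /(supp _ _ _ _ row_i).
  by rewrite (mem_win W0 j); lia.
apply: eq_bigr => j _; rewrite (@big_win_stable _ _ _ _ W0 W) // => l l_out.
apply/eqP/negPn/negP => /eqP /(supp _ _ _ _ row_i).
by rewrite (mem_win W0 l); lia.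
Qed.

End Xi.

Lemma eps_rel0 (A : zmat) i : (forall r s, A r s = 0%N) -> eps_rel A i 0.
Proof.
move=> A0; exists 0%N => W _; apply: big1 => r _; apply: big1 => s _.
by rewrite !A0 !if_same subr0.
Qed.

Section CoordinateChains.
Variable F : fieldType.

Definition cchain (h : int -> int) : chain F := fun i x => forall k, i < h k -> x k = 0.

Lemma cchain_subspace h i : is_subspace (cchain h i).
Proof.
split; first by [].
split; first by move=> x y Hx Hy k Hk; rewrite Hx // Hy // addr0.
by move=> c x Hx k Hk; rewrite Hx // mulr0.
Qed.

Lemma relpos_cchain (rho sigma : int -> int) i j N (f : 'I_N -> int) :
  injective f -> (forall k, (exists t, f t = k) <-> (rho k = i /\ sigma k = j)) ->
  qdim (capS (cchain rho i) (cchain sigma j))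
       (addS (capS (cchain rho (i - 1)) (cchain sigma j))
             (capS (cchain rho i) (cchain sigma (j - 1)))) N.
Proof.
move=> finj f_cell.
have cell_f t : rho (f t) = i /\ sigma (f t) = j by apply/f_cell; exists t.
exists (fun t => unitv F (f t)); split.
  move=> t; have [rho_f sigma_f] := cell_f t.
  by split=> k lt_k; rewrite /unitv; case: eqP => // Ek; subst k; lia.
split.
  move=> c [y [z [[y0 _] [[_ z0] E]]]] t; have [rho_f sigma_f] := cell_f t.
  by have := E (f t); rewrite lincomb_unitv // y0 ?z0 ?addr0 //; lia.
move=> x [x0 x0'].
pose x' k := x k - lincomb (fun t => x (f t)) (fun t => unitv F (f t)) k.
have x'_cell k : (exists t, f t = k) -> x' k = 0.
  by move=> [t <-]; rewrite /x' lincomb_unitv // subrr.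
have x'_out k : ~ (exists t, f t = k) -> x' k = x k.
  move=> k_out; rewrite /x' lincomb_unitv_out ?subr0 // => t.
  by apply/eqP => E; apply: k_out; exists t.
exists (fun t => x (f t)).
exists (fun k => if rho k < i then x' k else 0), (fun k => if rho k < i then 0 else x' k).
split; first split.
- by move=> k lt_k; rewrite ifF //; lia.
- move=> k lt_k; case: ifP => // _; rewrite x'_out ?x0' // => /f_cell [_ E]; lia.
split; first split.
- move=> k lt_k; rewrite ifF; last lia.
  by rewrite x'_out ?x0 // => /f_cell [E _]; lia.
- move=> k lt_k; case: ifP => // rho_k.
  have [k_cell|k_out] := classic (exists t, f t = k); first by rewrite x'_cell.
  rewrite x'_out //; have [Er|Nr] := eqVneq (rho k) i.
    by have [Es|Ns] := eqVneq (sigma k) j; [case: k_out; apply/f_cell | apply: x0'; lia].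
  by apply: x0; move: rho_k Nr; rewrite ltNge; lia.
by move=> k; case: ifP => _; rewrite ?addr0 ?add0r.
Qed.

Variables n d : nat.
Hypothesis d_gt0 : (0 < d)%N.

(* Coordinate [a + d q] (with [0 <= a < d]) enters the chain at step [h0 a - n q]. *)
Definition hshift (h0 : nat -> int) (k : int) : int :=
  h0 (absz (k %% d%:Z)%Z) - n%:Z * (k %/ d%:Z)%Z.

Lemma hshiftD h0 k (q : int) : hshift h0 (k + q * d%:Z) = hshift h0 k - n%:Z * q.
Proof. by rewrite /hshift (addrC k) modzMDl divzMDl; [ring | lia]. Qed.

Lemma hshift_small h0 (a : nat) (q : int) : (a < d)%N ->
  hshift h0 (a%:Z + q * d%:Z) = h0 a - n%:Z * q.
Proof.
move=> lt_ad; rewrite hshiftD /hshift modz_small ?divz_small; try lia.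
by rewrite /= mulr0 subr0.
Qed.

Lemma hshift_decomp h0 k : exists q (a : nat),
  [/\ k = a%:Z + q * d%:Z, (a < d)%N & hshift h0 k = h0 a - n%:Z * q].
Proof.
have := divz_eq k d%:Z; set q := (k %/ d%:Z)%Z => Ek.
have a_ge0 : 0 <= (k %% d%:Z)%Z by apply: modz_ge0; lia.
have a_lt : (k %% d%:Z)%Z < d%:Z by apply: ltz_pmod; lia.
exists q, (absz (k %% d%:Z)%Z); split; [lia | lia | by []].
Qed.

Lemma cchain_is_chain h0 (Bd : nat) : (0 < n)%N ->
  (forall a, (a < d)%N -> `|h0 a| <= Bd%:Z) -> is_chain n d (cchain (hshift h0)).
Proof.
move=> n_gt0 h0_bd.
have cchain_mono i x : cchain (hshift h0) i x -> cchain (hshift h0) (i + n%:Z) x.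
  by move=> Lx k lt_k; apply: Lx; lia.
have epsv_stable i x : cchain (hshift h0) (i + n%:Z) x -> cchain (hshift h0) i (epsv d x).
  move=> Lx k lt_k; apply: Lx.
  by have := hshiftD h0 k (-1); rewrite mulN1r mulrN1 opprK => ->; lia.
split.
  move=> i; split; first exact: cchain_subspace.
  split; first by move=> x /cchain_mono /epsv_stable.
  exists (((Bd + absz i)%N)%:Z * d%:Z + d%:Z); split=> x Lx k lt_k; apply: Lx;
    have [q [a [Ek lt_ad Eh]]] := hshift_decomp h0 k; have := h0_bd a lt_ad;
    move: lt_k; rewrite Eh ?Ek -abszE; nia.
split; first by move=> i x Lx k lt_k; apply: Lx; lia.
move=> i x; split; first exact: epsv_stable.
move=> Lx k lt_k; rewrite -[k](addrK d%:Z) (_ : k + d%:Z = k + 1 * d%:Z); last ring.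
by apply: Lx; rewrite hshiftD mulr1; lia.
Qed.

End CoordinateChains.

Section Realization.
Variables n d : nat.
Hypothesis n_gt0 : (0 < n)%N.
Hypothesis d_gt0 : (0 < d)%N.
Variable C : zmat.
Hypothesis CXi : inXi n d C.
Variable W0 : nat.
Hypothesis Csupp : forall i j, i \in rows n -> C i j <> 0%N -> j \in win W0.
Hypothesis Csum : (\sum_(i <- rows n) \sum_(j <- win W0) C i j)%N = d.

(* The [d] basis vectors of a period, each labelled by the entry [(i, j)] of
   [C] (with [1 <= i <= n]) it accounts for. *)
Definition labels : seq (int * int) :=
  flatten [seq flatten [seq nseq (C i j) (i, j) | j <- win W0] | i <- rows n].

Lemma count_labels (P : pred (int * int)) :
  count P labels = (\sum_(i <- rows n) \sum_(j <- win W0) (P (i, j) * C i j))%N.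
Proof.
rewrite count_flatten sumnE !big_map; apply: eq_bigr => i _.
by rewrite count_flatten sumnE !big_map; apply: eq_bigr => j _; rewrite count_nseq.
Qed.

Lemma size_labels : size labels = d.
Proof.
rewrite -Csum -(count_predT labels) count_labels; apply: eq_bigr => i _.
by apply: eq_bigr => j _; rewrite mul1n.
Qed.

Lemma mem_labels x : x \in labels -> (x.1 \in rows n) && (x.2 \in win W0).
Proof.
case/flattenP => s /mapP [i row_i ->] /flattenP [s' /mapP [j win_j ->]].
by rewrite mem_nseq => /andP [_ /eqP ->] /=; rewrite row_i win_j.
Qed.

Lemma count_labels1 i0 j0 : i0 \in rows n -> count (pred1 (i0, j0)) labels = C i0 j0.
Proof.
move=> row_i0; rewrite count_labels (bigD1_seq i0) ?uniq_rows //=.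
rewrite [X in (_ + X)%N]big1_seq ?addn0 => [|i /andP [ne_i _]]; last first.
  by apply: big1 => j _; rewrite /= xpair_eqE (negbTE ne_i).
have [win_j0|out_j0] := boolP (j0 \in win W0).
  rewrite (bigD1_seq j0) ?uniq_win //= eqxx mul1n big1_seq ?addn0 //.
  by move=> j /andP [ne_j _]; rewrite /= xpair_eqE eqxx (negbTE ne_j).
rewrite big1_seq => [|j /andP [_ win_j]].
  by apply/esym/eqP/negPn/negP => /eqP /(Csupp row_i0); apply/negP.
by rewrite /= xpair_eqE eqxx /=; case: eqP => [E|]; [subst; rewrite win_j in out_j0 | rewrite mul0n].
Qed.

Definition row_of (a : nat) : int := (nth (0, 0) labels a).1.
Definition col_of (a : nat) : int := (nth (0, 0) labels a).2.

Lemma row_col_of a : (a < d)%N -> (row_of a \in rows n) && (col_of a \in win W0).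
Proof. by move=> lt_ad; apply/mem_labels/mem_nth; rewrite size_labels. Qed.

(* Witness: the [a - q0 d] labelled by [(i0, j - n q0)], the translate of
   [(i, j)] with [i0 = i - n q0] in [1..n]. *)
Lemma cell_enum i j : exists K : seq int, [/\ uniq K, size K = C i j &
  forall k, k \in K <-> (hshift n d row_of k = i /\ hshift n d col_of k = j)].
Proof.
have := divz_eq (i - 1) n%:Z.
set q0 := ((i - 1) %/ n%:Z)%Z; set i0 := ((i - 1) %% n%:Z)%Z + 1 => Ei.
have m_ge0 : 0 <= ((i - 1) %% n%:Z)%Z by apply: modz_ge0; lia.
have m_lt : ((i - 1) %% n%:Z)%Z < n%:Z by apply: ltz_pmod; lia.
have row_i0 : i0 \in rows n by rewrite mem_rows /i0; lia.
pose cell a := nth (0, 0) labels a == (i0, j - n%:Z * q0).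
exists [seq a%:Z - q0 * d%:Z | a <- [seq a <- iota 0 d | cell a]]; split.
- rewrite map_inj_uniq ?filter_uniq ?iota_uniq // => a b /addIr /eqP.
  by rewrite eqz_nat => /eqP.
- rewrite size_map size_filter -(count_map _ (pred1 (i0, j - n%:Z * q0))).
  have -> : [seq nth (0, 0) labels a | a <- iota 0 d] = labels.
    by have := mkseq_nth (0, 0) labels; rewrite size_labels.
  rewrite count_labels1 // -(periodic_shift CXi.1 q0).
  by congr C; rewrite /i0; lia.
move=> k; split.
  move=> /mapP [a]; rewrite mem_filter mem_iota => /andP [/eqP cell_a /andP [_ lt_ad]] ->.
  rewrite (_ : - (q0 * d%:Z) = - q0 * d%:Z); last ring.
  by rewrite !hshift_small // /row_of /col_of cell_a /=; split; [lia | ring].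
move=> [Ehr Ehc]; have [q [a [Ek lt_ad Eh]]] := hshift_decomp n d_gt0 row_of k.
move: Ehr Ehc; rewrite Ek !hshift_small // => Ehr Ehc.
have := row_col_of lt_ad; rewrite mem_rows => /andP [/andP [r1 r2] _].
have Eq : q = - q0 by nia.
apply/mapP; exists a; last by rewrite Eq; ring.
rewrite mem_filter mem_iota lt_ad andbT /cell.
move: Ehr Ehc r1 r2; rewrite /row_of /col_of; case: (nth _ _ _) => x y /= Ehr Ehc r1 r2.
by rewrite xpair_eqE; apply/andP; split; apply/eqP; nia.
Qed.

Lemma relpos_realization (F : fieldType) :
  relpos (@cchain F (hshift n d row_of)) (@cchain F (hshift n d col_of)) C.
Proof.
move=> i j; have [K [uK sizeK memK]] := cell_enum i j.
apply: (@relpos_cchain F _ _ i j (C i j) (fun t : 'I_(C i j) => nth 0 K t)).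
  by move=> t1 t2 /eqP; rewrite nth_uniq ?sizeK // => /eqP /val_inj.
move=> k; split=> [[t <-]|/memK k_in]; first by apply/memK/mem_nth; rewrite sizeK.
have lt_k : (index k K < C i j)%N by rewrite -sizeK index_mem.
by exists (Ordinal lt_k); rewrite /= nth_index.
Qed.

End Realization.

Lemma exists_chains_relpos (F : fieldType) n d (C : zmat) : (0 < n)%N -> (0 < d)%N -> inXi n d C ->
  exists L L'' : chain F, [/\ is_chain n d L, is_chain n d L'' & relpos L L'' C].
Proof.
move=> n_gt0 d_gt0 CXi; have [W0 [Csupp Csum]] := inXi_support CXi.
exists (@cchain F (hshift n d (row_of n C W0))), (@cchain F (hshift n d (col_of n C W0))).
split; last exact: relpos_realization.
- apply: (@cchain_is_chain F n d d_gt0 _ (n + W0)%N n_gt0) => a lt_ad.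
  by have := row_col_of Csum lt_ad; rewrite mem_rows -abszE => /andP [? _]; lia.
- apply: (@cchain_is_chain F n d d_gt0 _ (n + W0)%N n_gt0) => a lt_ad.
  by have := row_col_of Csum lt_ad; rewrite mem_win -abszE => /andP [_ ?]; lia.
Qed.

Lemma exists_prime_seq k : exists s : seq nat, [/\ uniq s, all prime s & size s = k].
Proof.
elim: k => [|k [s [us ps ss]]]; first by exists [::].
have [P gtP prP] := prime_above (\max_(x <- s) x).
exists (P :: s); split => /=; [|by rewrite prP|by rewrite ss].
rewrite us andbT; apply/negP => Ps.
by have := @leq_bigmax_seq _ s xpredT id P Ps isT; rewrite leqNgt gtP.
Qed.

(* A nonzero polynomial has fewer roots than its size, while the square roots
   of distinct primes are distinct. *)
Lemma exists_prime_nonroot (p : {poly int}) : p != 0 ->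
  exists P, prime P /\ (map_poly (fun c : int => c%:~R) p : {poly algC}).[sqrtC P%:R] != 0.
Proof.
move=> p_neq0; set pc := map_poly _ p.
have size_pc : size pc = size p.
  by apply: size_map_poly_id0; rewrite intr_eq0 lead_coef_eq0.
have pc_neq0 : pc != 0 by rewrite -size_poly_eq0 size_pc size_poly_eq0.
have [s [us ps ss]] := exists_prime_seq (size p).
have urs : uniq [seq sqrtC (P%:R : algC) | P <- s].
  rewrite map_inj_in_uniq // => a b _ _ /(congr1 (fun x => x ^+ 2)) /=.
  by rewrite !sqrtCK => /eqP; rewrite eqr_nat => /eqP.
have [/allP all_roots|] := boolP (all (root pc) [seq sqrtC (P%:R : algC) | P <- s]).
  have := max_poly_roots pc_neq0 (introT allP all_roots) urs.
  by rewrite size_map ss size_pc ltnn.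
by case/allPn => x /mapP [P Ps ->] not_root; exists P; split; [exact: (allP ps) | exact: not_root].
Qed.

(* Evaluating the coefficient at [v = sqrt P] with [p(sqrt P) <> 0] forces the
   number of intermediate chains over [F_P] to be nonzero. *)
Lemma schur_coeff_middle_chain n d (A B C : zmat) (p : {poly int}) (k : nat) :
  (0 < n)%N -> (0 < d)%N -> inXi n d A -> inXi n d B -> inXi n d C ->
  is_schur_coeff n d B A C p k -> p != 0 ->
  exists (F : fieldType) (L L' L'' : chain F),
    [/\ [/\ is_chain n d L, is_chain n d L' & is_chain n d L''],
        relpos L L' B, relpos L' L'' A & relpos L L'' C].
Proof.
move=> n_gt0 d_gt0 AXi BXi CXi HQ p_neq0.
have [P [prP p_sqrtP]] := exists_prime_nonroot p_neq0.
have [L [L'' [CL CL'' posC]]] := exists_chains_relpos 'F_P n_gt0 d_gt0 CXi.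
have [m [[f [fL' _]] m_eq]] := HQ _ L L'' CL CL'' posC.
have [dA HdA] := dA_exists n_gt0 AXi.
have [dB HdB] := dA_exists n_gt0 BXi.
have [dC HdC] := dA_exists n_gt0 CXi.
case: m f fL' {m_eq}(m_eq dA dB dC HdA HdB HdC) => [|m] f fL'.
  rewrite mulr0 /laurent_eval card_Fp // => /eqP.
  rewrite mulf_eq0 invr_eq0 (negbTE p_sqrtP) expf_eq0 sqrtC_eq0 pnatr_eq0.
  by move=> /andP [_ /eqP P0]; rewrite P0 in prP.
move=> _; have [CL' [posB posA]] := fL' ord0.
by exists 'F_P, L, (f ord0), L''.
Qed.

Theorem mainTheorem5 (n d : nat) (hn : (0 < n)%N) (A B C : zmat)
  (HA : inXi n d A) (HB : inXi n d B) (HC : inXi n d C)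
  (alpha beta : nat -> nat)
  (HBform : (forall r s, B r s = Bupper n alpha beta r s) \/
            (forall r s, B r s = Blower n alpha beta r s))
  (p : {poly int}) (k : nat)
  (HQ : is_schur_coeff n d B A C p k) (Hnz : p != 0) :
  forall i : int, exists x y : int,
    eps_rel C i (x + y) /\ eps_rel A i x /\ eps_rel B i y.
Proof.
move=> i; have [d0|d_gt0] := posnP d.
  exists 0, 0; rewrite addr0.
  by split; [|split]; apply: eps_rel0; apply: (inXi0 hn _ d0).
have [F [L [L' [L'' [[CL CL' CL''] posB posA posC]]]]] :=
  schur_coeff_middle_chain hn d_gt0 HA HB HC HQ Hnz.
by have [x [y [? ? ?]]] := eps_additive i d_gt0 CL CL' CL'' posB posA posC; exists x, y.
Qed.
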